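(* Let $f:\mathbb{R}^p\to\mathbb{R}\cup\{+\infty\}$ be $\mu_f$-strongly convex and $L_f$-smooth, and $g:\mathbb{R}^p\to\mathbb{R}\cup\{+\infty\}$ proper, closed, convex. Fix $x^0\in\operatorname{dom} f\cap\operatorname{dom} g$, $\xi^0\in\partial g(x^0)$, and for $\tau\in(0,1]$ let $x^\ast_\tau$ be the minimizer of $\tau f(x)-(1-\tau)\langle\xi^0,x\rangle+g(x)$. Let $0<m\le L<+\infty$ satisfy $\omega:=\frac1m\sqrt{(L-2\mu_f)m+L_f^2}<1$. Let $\{\tau_k\}\subset(0,1]$ and let $\{x^k\}$ be generated by $x^{k+1}:=\operatorname{prox}^{H_k}_{\frac{1}{\tau_{k+1}}g}\big(x^k-H_k^{-1}(\nabla f(x^k)-(\tfrac{1}{\tau_{k+1}}-1)\xi^0)\big)$ with $H_k\in\mathbb{S}^p_{++}$, $m\mathbb{I}\preceq H_k\preceq L\mathbb{I}$. Then $$\|x^{k+1}-x^\ast_{\tau_{k+1}}\|_2\le\omega\|x^k-x^\ast_{\tau_{k+1}}\|_2.$$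
   Context: $L_f$-smooth: $\|\nabla f(x)-\nabla f(y)\|_2\le L_f\|x-y\|_2$. For $H\in\mathbb{S}^p_{++}$ (symmetric positive definite), $\|u\|_H:=\langle Hu,u\rangle^{1/2}$ and $\operatorname{prox}^H_h(x):=\arg\min_u\{h(u)+\tfrac12\|u-x\|_H^2\}$. *)

From HB Require Import structures.
From mathcomp Require Import all_boot all_order all_algebra.
From mathcomp Require Import all_classical all_reals all_analysis.
Set Implicit Arguments. Unset Strict Implicit. Unset Printing Implicit Defensive.
Import Order.TTheory GRing.Theory Num.Theory.
Import numFieldNormedType.Exports.
Local Open Scope classical_set_scope.
Local Open Scope ring_scope.

Section Defs.
Variables (R : realType) (p : nat).
Notation V := 'cV[R]_p.

Definition inner (u v : V) : R := (u^T *m v) 0 0.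
Definition norm2 (u : V) : R := Num.sqrt (inner u u).
Definition normH (H : 'M[R]_p) (u : V) : R := Num.sqrt (inner (H *m u) u).

Definition sym_posdef (H : 'M[R]_p) : Prop :=
  H^T = H /\ forall u : V, u != 0 -> 0 < inner (H *m u) u.

Definition loewner_bounds (m L : R) (H : 'M[R]_p) : Prop :=
  forall u : V, m * inner u u <= inner (H *m u) u /\ inner (H *m u) u <= L * inner u u.

Definition is_gradient (f : V -> R) (gradf : V -> V) : Prop :=
  forall x : V, differentiable f x /\ ('d f x : V -> R) = (fun h => inner (gradf x) h).

Definition strongly_convex (mu : R) (f : V -> R) : Prop :=
  forall (x y : V) (t : R), 0 <= t <= 1 ->
    f (t *: x + (1 - t) *: y) <=
      t * f x + (1 - t) * f y - mu / 2 * t * (1 - t) * norm2 (x - y) ^+ 2.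

Definition lipschitz_gradient (Lf : R) (gradf : V -> V) : Prop :=
  forall x y : V, norm2 (gradf x - gradf y) <= Lf * norm2 (x - y).

Definition proper_fun (g : V -> \bar R) : Prop :=
  (forall x, g x != -oo%E) /\ (exists x, (g x < +oo)%E).

(* closed = lower semicontinuous = all sublevel sets closed *)
Definition closed_fun (g : V -> \bar R) : Prop :=
  forall a : R, closed [set x | (g x <= a%:E)%E].

Definition convex_efun (g : V -> \bar R) : Prop :=
  forall (x y : V) (t : R), 0 <= t <= 1 ->
    (g (t *: x + (1 - t) *: y)%R <= t%:E * g x + (1 - t)%:E * g y)%E.

Definition subgradient (g : V -> \bar R) (x xi : V) : Prop :=
  forall y : V, (g x + (inner xi (y - x)%R)%:E <= g y)%E.

Definition is_minimizer (F : V -> \bar R) (x : V) : Prop :=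
  forall y : V, (F x <= F y)%E.

Definition is_prox (H : 'M[R]_p) (h : V -> \bar R) (z u : V) : Prop :=
  is_minimizer (fun v => (h v + (2^-1 * normH H (v - z) ^+ 2)%:E)%E) u.

End Defs.

From HB Require Import structures.
From mathcomp Require Import all_boot all_order all_algebra.
From mathcomp Require Import all_classical all_reals all_analysis.
From mathcomp Require Import ring lra.
Import Order.TTheory GRing.Theory Num.Theory.
Import numFieldNormedType.Exports.
Local Open Scope classical_set_scope.
Local Open Scope ring_scope.

(* Write t = tau_(k+1), xs = x*_t, e = x^(k+1) - xs, d = x^k - xs and
   G = grad f(x^k) - grad f(xs).  The optimality condition of xs and the
   variational inequality of the proximal step, added together, give
   ||e||_H^2 <= <H d - G, e>: the xi^0 terms cancel because the step is tilted
   by the same (1/t - 1) xi^0.  With v = H^-1 G this says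
   <H e, e> <= <H (d - v), e>, hence ||e||_H^2 <= ||d - v||_H^2
   = ||d||_H^2 - 2 <G, d> + <G, v>, which strong monotonicity, m <G, v> <= |G|^2
   and the Lipschitz bound turn into m^2 |e|^2 <= ((L - 2 mu) m + Lf^2) |d|^2.
   Both first-order conditions are obtained from one-sided difference quotients
   along segments, using only convexity of g. *)

Section InnerProduct.
Context {R : realType} {p : nat}.
Notation V := 'cV[R]_p.
Implicit Types (u v w : V) (A : 'M[R]_p).

Lemma innerDl u v w : inner (u + v) w = inner u w + inner v w.
Proof. by rewrite /inner raddfD /= mulmxDl mxE. Qed.

Lemma innerZl (a : R) u w : inner (a *: u) w = a * inner u w.
Proof. by rewrite /inner linearZ /= -scalemxAl mxE. Qed.

Lemma innerNl u w : inner (- u) w = - inner u w.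
Proof. by rewrite -scaleN1r innerZl mulN1r. Qed.

Lemma innerBl u v w : inner (u - v) w = inner u w - inner v w.
Proof. by rewrite innerDl innerNl. Qed.

Lemma innerC u v : inner u v = inner v u.
Proof. by rewrite /inner -{1}(trmxK v) -trmx_mul mxE. Qed.

Lemma innerDr u v w : inner w (u + v) = inner w u + inner w v.
Proof. by rewrite !(innerC w) innerDl. Qed.

Lemma innerZr (a : R) u w : inner w (a *: u) = a * inner w u.
Proof. by rewrite !(innerC w) innerZl. Qed.

Lemma innerNr u w : inner w (- u) = - inner w u.
Proof. by rewrite !(innerC w) innerNl. Qed.

Lemma innerBr u v w : inner w (u - v) = inner w u - inner w v.
Proof. by rewrite innerDr innerNr. Qed.

Lemma inner_mulmxl A u v : inner (A *m u) v = inner u (A^T *m v).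
Proof. by rewrite /inner trmx_mul mulmxA. Qed.

Lemma inner_ge0 u : 0 <= inner u u.
Proof. by rewrite /inner mxE; apply: sumr_ge0 => i _; rewrite mxE -expr2 sqr_ge0. Qed.

Lemma norm2_sqr u : norm2 u ^+ 2 = inner u u.
Proof. by rewrite /norm2 sqr_sqrtr // inner_ge0. Qed.

Lemma sym_posdef_unitmx {A : 'M[R]_p} : sym_posdef A -> A \in unitmx.
Proof.
move=> [AT Apos]; rewrite unitmxE unitfE; apply/eqP => /eqP /det0P [v v0 vA].
have Av : A *m v^T = 0 by rewrite -{1}AT -trmx_mul vA trmx0.
have vT0 : v^T != 0 by apply: contra v0 => /eqP vT0; rewrite -(trmxK v) vT0 trmx0.
by have := Apos _ vT0; rewrite Av /inner trmx0 mul0mx mxE ltxx.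
Qed.

Lemma normH_sqr (A : 'M[R]_p) (w : V) :
  (forall v, 0 <= inner (A *m v) v) -> normH A w ^+ 2 = inner (A *m w) w.
Proof. by move=> A_psd; rewrite /normH sqr_sqrtr. Qed.

Lemma loewner_bounds_psd {m L : R} {A : 'M[R]_p} :
  0 <= m -> loewner_bounds m L A -> forall w, 0 <= inner (A *m w) w.
Proof. by move=> m0 AmL w; apply: le_trans (proj1 (AmL w)); rewrite mulr_ge0 ?inner_ge0. Qed.

Section QuadraticForm.
Variable A : 'M[R]_p.
Hypotheses (A_sym : A^T = A) (A_psd : forall w, 0 <= inner (A *m w) w).

Lemma qformD u v : inner (A *m (u + v)) (u + v) =
  inner (A *m u) u + 2 * inner (A *m u) v + inner (A *m v) v.
Proof.
have vu : inner (A *m v) u = inner (A *m u) v by rewrite inner_mulmxl A_sym innerC.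
rewrite mulmxDr !innerDl !innerDr vu; lra.
Qed.

Lemma qform_le_of_inner_le u v :
  inner (A *m u) u <= inner (A *m v) u -> inner (A *m u) u <= inner (A *m v) v.
Proof.
move=> uv; have := A_psd (v - u).
rewrite qformD mulmxN !innerNl !innerNr opprK; lra.
Qed.

Lemma inner_invmx_le {m : R} (G : V) : 0 <= m -> A \in unitmx ->
  (forall w, m * inner w w <= inner (A *m w) w) ->
  m * inner G (invmx A *m G) <= inner G G.
Proof.
move=> m0 Aunit Am; set v := invmx A *m G.
have Av : A *m v = G by rewrite /v mulmxA mulmxV ?mul1mx.
have := inner_ge0 (G - m *: v).
rewrite !innerBl !innerBr !innerZl !innerZr (innerC v G).
have : m * (m * inner v v) <= m * inner G v by rewrite ler_wpM2l // -{1}Av Am.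
lra.
Qed.

End QuadraticForm.
End InnerProduct.

Lemma cvg_at_right_le_affine {R : realType} {F : R -> R} {l a : R} (b : R) :
  F @ 0^'+ --> l -> (forall s, 0 < s < 1 -> F s <= a + s * b) -> l <= a.
Proof.
move=> Fl Fab.
have sb0 : ( *%R^~ b) @ 0^'+ --> (0 : R) * b.
  by apply: cvgM; [apply: cvg_at_right_filter; exact: cvg_id | exact: cvg_cst].
have Fbl : (F - ( *%R^~ b)) @ 0^'+ --> l - 0 * b by exact: cvgB.
rewrite mul0r subr0 in Fbl.
apply: (closed_cvg _ (@closed_le _ a) _ _ Fbl); near=> s.
suff : F s <= a + s * b by rewrite /= !fctE; lra.
by apply: Fab; apply/andP; split; near: s; [exact: nbhs_right_gt | exact: nbhs_right_lt].
Unshelve. all: by end_near.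
Qed.

Section ProxGradient.
Context {R : realType} {p : nat}.
Notation V := 'cV[R]_p.

Definition dquot (phi : V -> R) (x d : V) (s : R) : R := s^-1 * (phi (s *: d + x) - phi x).

Lemma is_gradient_dquot_cvg {f : V -> R} {gradf : V -> V} (x d : V) :
  is_gradient f gradf -> dquot f x d @ 0^'+ --> inner (gradf x) d.
Proof.
move=> /(_ x) [fx dfx]; apply: cvg_dnbhs_at_right.
have -> : inner (gradf x) d = derive f x d by rewrite deriveE // dfx.
exact: (diff_derivable (v := d) fx).
Qed.

Lemma dquot_tilted_cvg {f : V -> R} {gradf : V -> V} (xi : V) (t : R) (x d : V) :
  is_gradient f gradf ->
  dquot (fun y => t * f y - (1 - t) * inner xi y) x d @ 0^'+ -->
    t * inner (gradf x) d - (1 - t) * inner xi d.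
Proof.
move=> fgrad.
apply: cvg_trans (cvgB (cvgM (cvg_cst t) (is_gradient_dquot_cvg x d fgrad))
  (cvg_cst ((1 - t) * inner xi d))).
apply: near_eq_cvg; near=> s.
have s0 : s != 0 by apply: lt0r_neq0; near: s; exact: nbhs_right_gt.
rewrite /dquot /GRing.mul_fun !fctE innerDr innerZr; field.
Unshelve. all: by end_near.
Qed.

Lemma dquot_half_sqr_normH_cvg {A : 'M[R]_p} (z x d : V) :
  A^T = A -> (forall w, 0 <= inner (A *m w) w) ->
  dquot (fun v => 2^-1 * normH A (v - z) ^+ 2) x d @ 0^'+ --> inner (A *m (x - z)) d.
Proof.
move=> A_sym A_psd; set c := 2^-1 * inner (A *m d) d.
have lin : (fun s => s * c) @ 0^'+ --> 0 * c.
  by apply: cvgM; [apply: cvg_at_right_filter; exact: cvg_id | exact: cvg_cst].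
have -> : inner (A *m (x - z)) d = inner (A *m (x - z)) d + 0 * c by rewrite mul0r addr0.
apply: cvg_trans (cvgD (cvg_cst (inner (A *m (x - z)) d)) lin).
apply: near_eq_cvg; near=> s.
have s0 : s != 0 by apply: lt0r_neq0; near: s; exact: nbhs_right_gt.
rewrite /dquot !fctE !normH_sqr //.
have -> : s *: d + x - z = (x - z) + s *: d by rewrite [RHS]addrC addrA.
rewrite qformD // -scalemxAr !innerZl !innerZr /c; field.
Unshelve. all: by end_near.
Qed.

Lemma strongly_convex_gradient_le {mu : R} {f : V -> R} {gradf : V -> V} (x y : V) :
  strongly_convex mu f -> is_gradient f gradf ->
  inner (gradf y) (x - y) <= f x - f y - mu / 2 * inner (x - y) (x - y).
Proof.
move=> fcvx fgrad; set N := inner (x - y) (x - y).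
apply: (cvg_at_right_le_affine (mu / 2 * N) (is_gradient_dquot_cvg y (x - y) fgrad)).
move=> s /andP[s0 s1]; have := fcvx x y s; rewrite (ltW s0) (ltW s1) => /(_ isT).
have -> : s *: x + (1 - s) *: y = s *: (x - y) + y.
  by apply/matrixP => i j; rewrite !mxE; ring.
rewrite norm2_sqr -/N /dquot => ineq.
rewrite ler_pdivrMl //; nra.
Qed.

Lemma strongly_convex_gradient_mono {mu : R} {f : V -> R} {gradf : V -> V} (x y : V) :
  strongly_convex mu f -> is_gradient f gradf ->
  mu * inner (x - y) (x - y) <= inner (gradf x - gradf y) (x - y).
Proof.
move=> fcvx fgrad.
have := strongly_convex_gradient_le x y fcvx fgrad.
have := strongly_convex_gradient_le y x fcvx fgrad.
rewrite -(opprB x y) !innerNl !innerNr opprK [inner (gradf x - _) _]innerBl; lra.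
Qed.

Lemma lipschitz_gradient_sqr {Lf : R} {gradf : V -> V} (x y : V) :
  lipschitz_gradient Lf gradf ->
  inner (gradf x - gradf y) (gradf x - gradf y) <= Lf ^+ 2 * inner (x - y) (x - y).
Proof.
move=> /(_ x y) lip; rewrite -!norm2_sqr.
have : 0 <= norm2 (gradf x - gradf y) by exact: sqrtr_ge0.
nra.
Qed.

Lemma is_minimizer_EFin_addC {phi : V -> R} {g : V -> \bar R} {x : V} :
  is_minimizer (fun y => ((phi y)%:E + g y)%E) x ->
  is_minimizer (fun y => (1%:E * g y + (phi y)%:E)%E) x.
Proof. by move=> xmin y; rewrite !mul1e ![(g _ + _)%E]addeC; exact: xmin. Qed.

Lemma minimizer_fin_num {phi : V -> R} {g : V -> \bar R} {c : R} {x y : V} :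
  0 < c -> (forall v, g v != -oo%E) ->
  is_minimizer (fun v => (c%:E * g v + (phi v)%:E)%E) x ->
  g y \is a fin_num -> g x \is a fin_num.
Proof.
move=> c0 gNoo xmin gy; rewrite fin_numE gNoo /=.
have : (c%:E * g x + (phi x)%:E < +oo)%E.
  by apply: le_lt_trans (xmin y) _; rewrite -(fineK gy) -EFinM -EFinD ltry.
by apply: contraTneq => ->; rewrite gt0_muley ?lte_fin // addye.
Qed.

Lemma minimizer_dquot_ge {phi : V -> R} {g : V -> \bar R} {c l : R} {x y : V} :
  0 <= c -> convex_efun g ->
  is_minimizer (fun v => (c%:E * g v + (phi v)%:E)%E) x ->
  g x \is a fin_num -> g y \is a fin_num -> dquot phi x (y - x) @ 0^'+ --> l ->
  c * (fine (g x) - fine (g y)) <= l.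
Proof.
move=> c0 gcvx xmin gx gy dq; rewrite -[_ <= _]lerN2.
apply: (cvg_at_right_le_affine 0 (cvgN dq)) => s /andP[s0 s1].
have xs : s *: y + (1 - s) *: x = s *: (y - x) + x.
  by apply/matrixP => i j; rewrite !mxE; ring.
have := gcvx y x s; rewrite (ltW s0) (ltW s1) xs -(fineK gx) -(fineK gy) => /(_ isT).
rewrite -!EFinM -EFinD => /(lee_wpmul2l (x := c%:E)); rewrite lee_fin => /(_ c0).
move=> /(leeD2r (phi (s *: (y - x) + x))%:E) /(le_trans (xmin _)).
rewrite -(fineK gx) -!EFinM -!EFinD lee_fin /dquot mulr0 addr0 lerN2 => ineq.
by rewrite ler_pdivlMl //; nra.
Qed.

Lemma prox_grad_step_ineq {f : V -> R} {gradf : V -> V} {g : V -> \bar R}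
    {xi : V} {t : R} {A : 'M[R]_p} {xs xk u : V} :
  is_gradient f gradf -> convex_efun g -> 0 < t ->
  A^T = A -> (forall w, 0 <= inner (A *m w) w) -> A \in unitmx ->
  is_minimizer (fun y => ((t * f y - (1 - t) * inner xi y)%:E + g y)%E) xs ->
  is_prox A (fun v => (t^-1%:E * g v)%E)
    (xk - invmx A *m (gradf xk - (t^-1 - 1) *: xi)) u ->
  g xs \is a fin_num -> g u \is a fin_num ->
  inner (A *m (u - xs)) (u - xs) <=
    inner (A *m (xk - xs) - (gradf xk - gradf xs)) (u - xs).
Proof.
move=> fgrad gcvx t0 A_sym A_psd A_unit xs_min u_prox gxs gu.
have ti0 : 0 < t^-1 by rewrite invr_gt0.
have Az (w : V) : A *m (u - (xk - invmx A *m w)) = A *m (u - xs) - A *m (xk - xs) + w.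
  rewrite !mulmxBr mulmxA mulmxV // mul1mx opprB addrA addrAC.
  by rewrite [in RHS]opprB addrA subrK.
set e := u - xs; set w := gradf xk - (t^-1 - 1) *: xi.
have vi_xs := minimizer_dquot_ge ler01 gcvx (is_minimizer_EFin_addC xs_min) gxs gu
  (dquot_tilted_cvg xi t xs e fgrad).
have vi_u := minimizer_dquot_ge (ltW ti0) gcvx u_prox gu gxs
  (dquot_half_sqr_normH_cvg (xk - invmx A *m w) u (xs - u) A_sym A_psd).
rewrite Az -(opprB u xs) -/e innerNr /w !innerDl !innerNl innerZl in vi_u.
rewrite innerDl innerNl innerBl.
have := ler_wpM2l (ltW ti0) vi_xs.
have -> : t^-1 * (t * inner (gradf xs) e - (1 - t) * inner xi e) =
    inner (gradf xs) e - (t^-1 - 1) * inner xi e by field; rewrite gt_eqF.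
rewrite mul1r; lra.
Qed.

Lemma qform_contraction {A : 'M[R]_p} {m L mu Lf : R} {e d G : V} :
  A^T = A -> A \in unitmx -> 0 < m -> loewner_bounds m L A ->
  inner (A *m e) e <= inner (A *m d - G) e ->
  mu * inner d d <= inner G d -> inner G G <= Lf ^+ 2 * inner d d ->
  m ^+ 2 * inner e e <= ((L - 2 * mu) * m + Lf ^+ 2) * inner d d.
Proof.
move=> A_sym A_unit m0 AmL eAd Gd GG.
have A_psd := loewner_bounds_psd (ltW m0) AmL.
set v := invmx A *m G.
have Av : A *m v = G by rewrite /v mulmxA mulmxV ?mul1mx.
have : inner (A *m e) e <= inner (A *m (d - v)) (d - v).
  by apply: qform_le_of_inner_le => //; rewrite mulmxBr Av.
rewrite qformD // mulmxN !innerNl !innerNr opprK Av.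
rewrite [inner (A *m d) v]inner_mulmxl A_sym Av.
have := inner_invmx_le A G (ltW m0) A_unit (fun w => proj1 (AmL w)); rewrite -/v.
have [me _] := AmL e; have [_ dL] := AmL d.
rewrite (innerC d G); nra.
Qed.

Lemma norm2_le_of_sqr_le {m K : R} {e d : V} :
  0 < m -> m ^+ 2 * inner e e <= K * inner d d ->
  norm2 e <= m^-1 * Num.sqrt K * norm2 d.
Proof.
move=> m0 ineq; rewrite -mulrA ler_pdivlMl // /norm2.
have -> : m * Num.sqrt (inner e e) = Num.sqrt (m ^+ 2 * inner e e).
  by rewrite sqrtrM ?sqr_ge0 // sqrtr_sqr ger0_norm // ltW.
have [K0|K0] := leP 0 K; first by rewrite -sqrtrM // ler_wsqrtr.
have : m ^+ 2 * inner e e <= 0.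
  by apply: le_trans ineq _; rewrite mulr_le0_ge0 ?inner_ge0 ?ltW.
by rewrite -sqrtr_eq0 => /eqP ->; rewrite ltr0_sqrtr // mul0r.
Qed.

End ProxGradient.

Theorem lemmaB3 (R : realType) (p : nat)
  (f : 'cV[R]_p -> R) (gradf : 'cV[R]_p -> 'cV[R]_p) (g : 'cV[R]_p -> \bar R)
  (mu Lf : R) (x0 xi0 : 'cV[R]_p) (xstar : R -> 'cV[R]_p)
  (m L : R) (tau : nat -> R) (x : nat -> 'cV[R]_p) (H : nat -> 'M[R]_p) :
  0 < mu -> strongly_convex mu f ->
  is_gradient f gradf -> lipschitz_gradient Lf gradf ->
  proper_fun g -> closed_fun g -> convex_efun g ->
  (g x0 < +oo)%E -> subgradient g x0 xi0 ->
  (forall t : R, 0 < t <= 1 ->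
     is_minimizer (fun y => ((t * f y - (1 - t) * inner xi0 y)%:E + g y)%E) (xstar t)) ->
  0 < m -> m <= L ->
  m^-1 * Num.sqrt ((L - 2 * mu) * m + Lf ^+ 2) < 1 ->
  (forall k, 0 < tau k <= 1) ->
  (forall k, sym_posdef (H k) /\ loewner_bounds m L (H k)) ->
  (forall k, is_prox (H k) (fun u => ((tau k.+1)^-1%:E * g u)%E)
       (x k - invmx (H k) *m (gradf (x k) - ((tau k.+1)^-1 - 1) *: xi0))
       (x k.+1)) ->
  forall k,
    norm2 (x k.+1 - xstar (tau k.+1)) <=
      m^-1 * Num.sqrt ((L - 2 * mu) * m + Lf ^+ 2) * norm2 (x k - xstar (tau k.+1)).
Proof.
move=> _ fcvx fgrad flip [gNoo _] _ gcvx gx0 _ xstar_min m0 _ _ tau01 Hbounds u_prox k.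
have [t0 _] := andP (tau01 k.+1).
have [H_pd HmL] := Hbounds k; have [H_sym _] := H_pd.
have H_unit := sym_posdef_unitmx H_pd.
have xs_min := xstar_min _ (tau01 k.+1).
have gx0_fin : g x0 \is a fin_num by rewrite fin_numE gNoo lt_eqF.
have gxs := minimizer_fin_num ltr01 gNoo (is_minimizer_EFin_addC xs_min) gx0_fin.
have ti0 : 0 < (tau k.+1)^-1 by rewrite invr_gt0.
have gu := minimizer_fin_num ti0 gNoo (u_prox k) gx0_fin.
have step := prox_grad_step_ineq fgrad gcvx t0 H_sym (loewner_bounds_psd (ltW m0) HmL)
  H_unit xs_min (u_prox k) gxs gu.
apply: (norm2_le_of_sqr_le m0).
apply: (qform_contraction H_sym H_unit m0 HmL step).
- exact: strongly_convex_gradient_mono _ _ fcvx fgrad.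
- exact: lipschitz_gradient_sqr _ _ flip.
Qed.
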